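(* Fix $N>0$, $\tilde\lambda=(\tilde\lambda_{\dot1},\tilde\lambda_{\dot2})\in\mathbb{C}^2$ and integers $k,l\ge0$. Define on $\mathbb{C}^2\setminus\{0\}$ $$\phi_{k,l}=\frac{k!\,l!}{(k+l)!}\sum_{j=0}^{\min(k,l)}\frac{(k+l-j)!}{j!\,(k-j)!\,(l-j)!}\Big(\frac{N}{\|u\|^2}\Big)^j[u\,\tilde\lambda]^k[\hat u\,\tilde\lambda]^l .$$ Then $\Delta\phi_{k,l}=0$ on $\mathbb{C}^2\setminus\{0\}$, where $\Delta$ is the Laplace–Beltrami operator of the Burns metric $g_N$; moreover $\phi_{k,l}=[u\,\tilde\lambda]^k[\hat u\,\tilde\lambda]^l\,(1+O(\|u\|^{-2}))$ as $\|u\|\to\infty$, and $\phi_{k,l}$ reduces to $[u\,\tilde\lambda]^k[\hat u\,\tilde\lambda]^l$ at $N=0$. Equivalently, with $\chi=\|u\|^2/N$, $\phi_{k,l}=\frac{k!l!}{(k+l)!}\chi^{-l}P^{(k-l,0)}_l(1+2\chi)[u\,\tilde\lambda]^k[\hat u\,\tilde\lambda]^l$ for $k\ge l$ (and symmetrically for $k<l$), $P^{(a,b)}_n$ being Jacobi polynomials.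
   Context: Fix $N>0$. On $\mathbb{C}^2\setminus\{0\}$ with coordinates $u=(u^{\dot1},u^{\dot2})$ write $\|u\|^2=|u^{\dot1}|^2+|u^{\dot2}|^2$ and $\hat u=(-\bar u^{\dot2},\bar u^{\dot1})$. The Burns metric is $g_N=2(|du^{\dot1}|^2+|du^{\dot2}|^2)+2N|u^{\dot2}du^{\dot1}-u^{\dot1}du^{\dot2}|^2/\|u\|^4$; its Laplace–Beltrami operator is explicitly $$\Delta=\frac{2}{1+N/\|u\|^2}\Big(\sum_{a}\frac{\partial^2}{\partial u^{a}\partial\bar u^{a}}+\frac{N}{\|u\|^4}\Big(\sum_a u^a\frac{\partial}{\partial u^a}\Big)\Big(\sum_b\bar u^b\frac{\partial}{\partial\bar u^b}\Big)\Big).$$ For $\tilde\lambda\in\mathbb{C}^2$, $[u\,\tilde\lambda]:=u^{\dot1}\tilde\lambda_{\dot1}+u^{\dot2}\tilde\lambda_{\dot2}$ and $[\hat u\,\tilde\lambda]:=-\bar u^{\dot2}\tilde\lambda_{\dot1}+\bar u^{\dot1}\tilde\lambda_{\dot2}$. *)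

From Stdlib Require Import Reals Factorial.
From Coquelicot Require Import Coquelicot.
Open Scope R_scope.

Definition pt := (C * C)%type.

Definition norm2 (u : pt) : R := Cmod (fst u) ^ 2 + Cmod (snd u) ^ 2.
Definition normu (u : pt) : R := sqrt (norm2 u).

(* [u lam] and [hat u lam], hat u = (- conj u2, conj u1) *)
Definition brk (u lam : pt) : C :=
  (fst u * fst lam + snd u * snd lam)%C.
Definition hbrk (u lam : pt) : C :=
  (- Cconj (snd u) * fst lam + Cconj (fst u) * snd lam)%C.

(* real directional derivative of a C-valued function on C^2 = R^4,
   along the real direction v, computed on real and imaginary parts *)
Definition dirD (f : pt -> C) (v : pt) (p : pt) : C :=
  (Derive (fun t : R => Re (f (fst p + RtoC t * fst v, snd p + RtoC t * snd v)%C)) 0,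
   Derive (fun t : R => Im (f (fst p + RtoC t * fst v, snd p + RtoC t * snd v)%C)) 0).

Definition e1 : pt := (RtoC 1, RtoC 0).
Definition e2 : pt := (RtoC 0, RtoC 1).
Definition ie1 : pt := (Ci, RtoC 0).
Definition ie2 : pt := (RtoC 0, Ci).

Definition d1 (f : pt -> C) (p : pt) : C := (/2 * (dirD f e1 p - Ci * dirD f ie1 p))%C.
Definition d2 (f : pt -> C) (p : pt) : C := (/2 * (dirD f e2 p - Ci * dirD f ie2 p))%C.
Definition db1 (f : pt -> C) (p : pt) : C := (/2 * (dirD f e1 p + Ci * dirD f ie1 p))%C.
Definition db2 (f : pt -> C) (p : pt) : C := (/2 * (dirD f e2 p + Ci * dirD f ie2 p))%C.

Definition EulerBar (f : pt -> C) (q : pt) : C :=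
  (Cconj (fst q) * db1 f q + Cconj (snd q) * db2 f q)%C.

Definition BurnsLaplacian (N : R) (f : pt -> C) (p : pt) : C :=
  (RtoC (2 / (1 + N / norm2 p)) *
   (d1 (db1 f) p + d2 (db2 f) p
    + RtoC (N / (norm2 p ^ 2)) *
      (fst p * d1 (EulerBar f) p + snd p * d2 (EulerBar f) p)))%C.

Definition factR (n : nat) : R := INR (fact n).

Definition mono (lam : pt) (k l : nat) (u : pt) : C :=
  (brk u lam ^ k * hbrk u lam ^ l)%C.

Definition phiCoef (N : R) (k l : nat) (u : pt) : R :=
  factR k * factR l / factR (k + l) *
  sum_f_R0 (fun j => factR (k + l - j) / (factR j * factR (k - j) * factR (l - j))
                      * (N / norm2 u) ^ j) (Nat.min k l).

Definition phi (N : R) (lam : pt) (k l : nat) (u : pt) : C :=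
  (RtoC (phiCoef N k l u) * mono lam k l u)%C.

Definition binomR (m s : nat) : R := factR m / (factR s * factR (m - s)).

Definition jacobiP (n a b : nat) (x : R) : R :=
  sum_f_R0 (fun s => binomR (n + a) (n - s) * binomR (n + b) s
                     * ((x - 1) / 2) ^ s * ((x + 1) / 2) ^ (n - s)) n.

From Pilot Require Import Defs.
From Stdlib Require Import Reals Lra Lia Factorial.
From Coquelicot Require Import Coquelicot.
Open Scope R_scope.

(* The idea is separation of variables.  [phi_{k,l}] is [F(|u|^2) M(u)] with the
   monomial [M = [u lam]^k [hat u lam]^l], holomorphic of degree [k] in [u] and
   antiholomorphic of degree [l].  For any such "sector function" the operators
   in the Burns Laplacian act only on the radial profile [F]: the Laplacian of
   [F(r) M] is [2/(1 + N/r) (radial_burns F)(r) M] with an explicit second-order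
   radial operator ([burns_laplacian_sector]).  The profile of [phi_{k,l}] is a
   finite sum whose coefficients obey a two-term recurrence that makes
   [radial_burns] telescope to zero ([profile_radial_equation]). *)

Lemma is_derive_eq (f : R -> R) (x l l' : R) :
  is_derive f x l -> l = l' -> is_derive f x l'.
Proof. now intros H <-. Qed.

Definition has_cderiv (g : R -> C) (z : C) : Prop :=
  is_derive (fun t => Re (g t)) 0 (Re z) /\ is_derive (fun t => Im (g t)) 0 (Im z).

Lemma has_cderiv_ext_loc (g h : R -> C) (z : C) :
  locally 0 (fun t => g t = h t) -> has_cderiv g z -> has_cderiv h z.
Proof.
  intros [e He] [Hre Him]; split; eapply is_derive_ext_loc; try eassumption;
    exists e; intros t Ht; now rewrite (He t Ht).
Qed.

Lemma has_cderiv_eq (g : R -> C) (z z' : C) : has_cderiv g z -> z = z' -> has_cderiv g z'.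
Proof. now intros H <-. Qed.

Lemma has_cderiv_const (c : C) : has_cderiv (fun _ => c) 0.
Proof. split; simpl; apply (is_derive_const (V := R_NormedModule)). Qed.

Lemma has_cderiv_affine (c w : C) : has_cderiv (fun t => c + RtoC t * w)%C w.
Proof.
  split; simpl; auto_derive; trivial; unfold Re, Im; ring.
Qed.

Lemma has_cderiv_plus (g h : R -> C) (a b : C) :
  has_cderiv g a -> has_cderiv h b -> has_cderiv (fun t => g t + h t)%C (a + b)%C.
Proof. intros [Ga Ga'] [Hb Hb']; split; now apply (is_derive_plus (V := R_NormedModule)). Qed.

Lemma has_cderiv_opp (g : R -> C) (a : C) :
  has_cderiv g a -> has_cderiv (fun t => - g t)%C (- a)%C.
Proof. intros [Ga Ga']; split; now apply (is_derive_opp (V := R_NormedModule)). Qed.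

Lemma has_cderiv_conj (g : R -> C) (a : C) :
  has_cderiv g a -> has_cderiv (fun t => Cconj (g t)) (Cconj a).
Proof. intros [Ga Ga']; split; [exact Ga | now apply (is_derive_opp (V := R_NormedModule))]. Qed.

Lemma has_cderiv_mult (g h : R -> C) (a b : C) :
  has_cderiv g a -> has_cderiv h b ->
  has_cderiv (fun t => g t * h t)%C (a * h 0 + g 0 * b)%C.
Proof.
  intros [Ga Ga'] [Hb Hb'].
  assert (Leibniz : forall (f1 f2 : R -> R) d1 d2, is_derive f1 0 d1 -> is_derive f2 0 d2 ->
    is_derive (fun t => f1 t * f2 t) 0 (d1 * f2 0 + f1 0 * d2)).
  { intros f1 f2 d1 d2 D1 D2. apply (is_derive_mult f1 f2); auto. apply Rmult_comm. }
  split; simpl.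
  - eapply is_derive_eq.
    + apply (is_derive_minus (V := R_NormedModule)); apply Leibniz; eassumption.
    + unfold minus, plus, opp, Re, Im; simpl; ring.
  - eapply is_derive_eq.
    + apply (is_derive_plus (V := R_NormedModule)); apply Leibniz; eassumption.
    + unfold plus, Re, Im; simpl; ring.
Qed.

Lemma has_cderiv_pow (g : R -> C) (a : C) (n : nat) :
  has_cderiv g a -> has_cderiv (fun t => g t ^ n)%C (RtoC (INR n) * g 0 ^ pred n * a)%C.
Proof.
  intros G. induction n as [|n IH].
  - eapply has_cderiv_eq; [apply (has_cderiv_const 1) |].
    change (INR 0) with 0. ring.
  - eapply has_cderiv_eq; [apply (has_cderiv_mult _ _ _ _ G IH) |].
    rewrite S_INR, RtoC_plus.
    destruct n; [change (INR 0) with 0 |]; cbn [pred Cpow]; ring.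
Qed.

Lemma has_cderiv_real_comp (r h : R -> R) (a : C) (d : R) :
  has_cderiv (fun t => RtoC (r t)) a -> is_derive h (r 0) d ->
  has_cderiv (fun t => RtoC (h (r t))) (RtoC d * a)%C.
Proof.
  intros [Hre Him] Hh.
  assert (Ha : Im a = 0).
  { change (is_derive (fun _ : R => 0) 0 (Im a)) in Him.
    rewrite <- (is_derive_unique _ _ _ Him). apply Derive_const. }
  split.
  - change (is_derive (fun t => h (r t)) 0 (Re (RtoC d * a))).
    change (is_derive r 0 (Re a)) in Hre.
    apply (is_derive_eq _ _ (Re a * d)).
    + exact (is_derive_comp h r 0 d (Re a) Hh Hre).
    + destruct a as [a1 a2]; unfold Im in Ha; cbn in Ha |- *; subst a2. ring.
  - change (is_derive (fun _ : R => 0) 0 (Im (RtoC d * a))).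
    apply (is_derive_eq _ _ 0).
    + apply (is_derive_const (V := R_NormedModule)).
    + destruct a as [a1 a2]; unfold Im in Ha; cbn in Ha |- *; subst a2. ring.
Qed.

Definition line (p v : pt) (t : R) : pt :=
  (fst p + RtoC t * fst v, snd p + RtoC t * snd v)%C.

Lemma line_0 (p v : pt) : line p v 0 = p.
Proof. destruct p; unfold line; cbn; f_equal; ring. Qed.

Definition wirt_form (a1 a2 b1 b2 : C) (v : pt) : C :=
  (a1 * fst v + a2 * snd v + b1 * Cconj (fst v) + b2 * Cconj (snd v))%C.

(* [has_wirtinger f p a1 a2 b1 b2]: along every real line through [p], [f] is
   differentiable with differential [wirt_form a1 a2 b1 b2]; then [(a1, a2)] and
   [(b1, b2)] are the holomorphic and antiholomorphic Wirtinger derivatives. *)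
Definition has_wirtinger (f : pt -> C) (p : pt) (a1 a2 b1 b2 : C) : Prop :=
  forall v, has_cderiv (fun t => f (line p v t)) (wirt_form a1 a2 b1 b2 v).

Lemma wirtinger_derivatives (f : pt -> C) (p : pt) (a1 a2 b1 b2 : C) :
  has_wirtinger f p a1 a2 b1 b2 ->
  Defs.d1 f p = a1 /\ Defs.d2 f p = a2 /\ db1 f p = b1 /\ db2 f p = b2.
Proof.
  intros H.
  assert (Dir : forall v, dirD f v p = wirt_form a1 a2 b1 b2 v).
  { intros v. destruct (H v) as [Hre Him].
    change ((Derive (fun t => Re (f (line p v t))) 0, Derive (fun t => Im (f (line p v t))) 0)
            = wirt_form a1 a2 b1 b2 v).
    apply injective_projections; cbn [fst snd]; apply is_derive_unique; assumption. }
  unfold Defs.d1, Defs.d2, db1, db2. rewrite !Dir.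
  unfold wirt_form, e1, e2, ie1, ie2; cbn [fst snd].
  destruct a1, a2, b1, b2; repeat split; apply injective_projections; cbn; field.
Qed.

Lemma has_wirtinger_eq (f : pt -> C) (p : pt) (a1 a2 b1 b2 a1' a2' b1' b2' : C) :
  has_wirtinger f p a1 a2 b1 b2 ->
  a1 = a1' -> a2 = a2' -> b1 = b1' -> b2 = b2' -> has_wirtinger f p a1' a2' b1' b2'.
Proof. now intros H <- <- <- <-. Qed.

Lemma has_wirtinger_ext (f g : pt -> C) (p : pt) (a1 a2 b1 b2 : C) :
  (forall q, f q = g q) -> has_wirtinger f p a1 a2 b1 b2 -> has_wirtinger g p a1 a2 b1 b2.
Proof.
  intros E H v. apply (has_cderiv_ext_loc (fun t => f (line p v t))); [| apply H].
  exists posreal_one; intros t _; apply E.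
Qed.

Lemma has_wirtinger_const (c : C) (p : pt) : has_wirtinger (fun _ => c) p 0 0 0 0.
Proof. intros v. eapply has_cderiv_eq; [apply has_cderiv_const | unfold wirt_form; ring]. Qed.

Lemma has_wirtinger_plus (f g : pt -> C) (p : pt) (a1 a2 b1 b2 c1 c2 e1 e2 : C) :
  has_wirtinger f p a1 a2 b1 b2 -> has_wirtinger g p c1 c2 e1 e2 ->
  has_wirtinger (fun q => f q + g q)%C p (a1 + c1) (a2 + c2) (b1 + e1) (b2 + e2).
Proof.
  intros F G v. eapply has_cderiv_eq; [apply has_cderiv_plus; [apply F | apply G] |].
  unfold wirt_form; ring.
Qed.

Lemma has_wirtinger_opp (f : pt -> C) (p : pt) (a1 a2 b1 b2 : C) :
  has_wirtinger f p a1 a2 b1 b2 ->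
  has_wirtinger (fun q => - f q)%C p (- a1) (- a2) (- b1) (- b2).
Proof.
  intros F v. eapply has_cderiv_eq; [apply has_cderiv_opp, F |].
  unfold wirt_form; ring.
Qed.

Lemma has_wirtinger_minus (f g : pt -> C) (p : pt) (a1 a2 b1 b2 c1 c2 e1 e2 : C) :
  has_wirtinger f p a1 a2 b1 b2 -> has_wirtinger g p c1 c2 e1 e2 ->
  has_wirtinger (fun q => f q - g q)%C p (a1 - c1) (a2 - c2) (b1 - e1) (b2 - e2).
Proof.
  intros F G. apply (has_wirtinger_plus _ (fun q => - g q)%C); [exact F |].
  now apply has_wirtinger_opp.
Qed.

Lemma has_wirtinger_mult (f g : pt -> C) (p : pt) (a1 a2 b1 b2 c1 c2 e1 e2 : C) :
  has_wirtinger f p a1 a2 b1 b2 -> has_wirtinger g p c1 c2 e1 e2 ->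
  has_wirtinger (fun q => f q * g q)%C p
    (a1 * g p + f p * c1) (a2 * g p + f p * c2) (b1 * g p + f p * e1) (b2 * g p + f p * e2).
Proof.
  intros F G v. eapply has_cderiv_eq; [apply has_cderiv_mult; [apply F | apply G] |].
  cbv beta; rewrite line_0; unfold wirt_form; ring.
Qed.

Lemma has_wirtinger_pow (f : pt -> C) (p : pt) (a1 a2 b1 b2 : C) (n : nat) :
  has_wirtinger f p a1 a2 b1 b2 ->
  let c := (RtoC (INR n) * f p ^ pred n)%C in
  has_wirtinger (fun q => f q ^ n)%C p (c * a1) (c * a2) (c * b1) (c * b2).
Proof.
  intros F c v. eapply has_cderiv_eq; [apply has_cderiv_pow, F |].
  cbv beta; rewrite line_0; unfold wirt_form, c; ring.
Qed.

Lemma has_wirtinger_real_comp (f : pt -> R) (h : R -> R) (p : pt) (a1 a2 b1 b2 : C) (d : R) :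
  has_wirtinger (fun q => RtoC (f q)) p a1 a2 b1 b2 -> is_derive h (f p) d ->
  has_wirtinger (fun q => RtoC (h (f q))) p
    (RtoC d * a1) (RtoC d * a2) (RtoC d * b1) (RtoC d * b2).
Proof.
  intros F H v. eapply has_cderiv_eq.
  - apply (has_cderiv_real_comp (fun t => f (line p v t))); [apply F | rewrite line_0; exact H].
  - unfold wirt_form; ring.
Qed.

Lemma has_wirtinger_u1 (p : pt) : has_wirtinger (fun q => fst q) p 1 0 0 0.
Proof. intros v. eapply has_cderiv_eq; [apply has_cderiv_affine | unfold wirt_form; ring]. Qed.

Lemma has_wirtinger_u2 (p : pt) : has_wirtinger (fun q => snd q) p 0 1 0 0.
Proof. intros v. eapply has_cderiv_eq; [apply has_cderiv_affine | unfold wirt_form; ring]. Qed.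

Lemma has_wirtinger_ubar1 (p : pt) : has_wirtinger (fun q => Cconj (fst q)) p 0 0 1 0.
Proof.
  intros v. eapply has_cderiv_eq; [apply has_cderiv_conj, has_cderiv_affine | unfold wirt_form; ring].
Qed.

Lemma has_wirtinger_ubar2 (p : pt) : has_wirtinger (fun q => Cconj (snd q)) p 0 0 0 1.
Proof.
  intros v. eapply has_cderiv_eq; [apply has_cderiv_conj, has_cderiv_affine | unfold wirt_form; ring].
Qed.

Lemma norm2_as_C (q : pt) : RtoC (norm2 q) = (fst q * Cconj (fst q) + snd q * Cconj (snd q))%C.
Proof. unfold norm2. rewrite RtoC_plus, !Cmod2_conj. reflexivity. Qed.

Lemma has_wirtinger_norm2 (p : pt) :
  has_wirtinger (fun q => RtoC (norm2 q)) p (Cconj (fst p)) (Cconj (snd p)) (fst p) (snd p).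
Proof.
  eapply has_wirtinger_ext; [intros q; symmetry; apply norm2_as_C |].
  eapply has_wirtinger_eq.
  { apply has_wirtinger_plus; apply has_wirtinger_mult.
    - apply has_wirtinger_u1.
    - apply has_wirtinger_ubar1.
    - apply has_wirtinger_u2.
    - apply has_wirtinger_ubar2. }
  all: cbv beta; ring.
Qed.

Lemma has_wirtinger_brk (lam p : pt) :
  has_wirtinger (fun q => brk q lam) p (fst lam) (snd lam) 0 0.
Proof.
  unfold brk. eapply has_wirtinger_eq.
  { apply has_wirtinger_plus; apply has_wirtinger_mult.
    - apply has_wirtinger_u1.
    - apply has_wirtinger_const.
    - apply has_wirtinger_u2.
    - apply has_wirtinger_const. }
  all: cbv beta; ring.
Qed.

Lemma has_wirtinger_hbrk (lam p : pt) :
  has_wirtinger (fun q => hbrk q lam) p 0 0 (snd lam) (- fst lam).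
Proof.
  unfold hbrk. eapply has_wirtinger_eq.
  { apply has_wirtinger_plus; apply has_wirtinger_mult.
    - apply has_wirtinger_opp, has_wirtinger_ubar2.
    - apply has_wirtinger_const.
    - apply has_wirtinger_ubar1.
    - apply has_wirtinger_const. }
  all: cbv beta; ring.
Qed.

Lemma norm2_pos (q : pt) : q <> (RtoC 0, RtoC 0) -> 0 < norm2 q.
Proof.
  intros Hq. destruct q as [q1 q2]. unfold norm2; cbn [fst snd].
  pose proof (pow2_ge_0 (Cmod q1)). pose proof (pow2_ge_0 (Cmod q2)).
  destruct (Ceq_dec q1 0) as [->|E1].
  - assert (E2 : q2 <> 0) by (intros ->; now apply Hq).
    apply Cmod_gt_0 in E2. nra.
  - apply Cmod_gt_0 in E1. nra.
Qed.

Lemma norm2_pos_near (p v : pt) : 0 < norm2 p -> locally 0 (fun t => 0 < norm2 (line p v t)).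
Proof.
  intros Hp. destruct (has_wirtinger_norm2 p v) as [Hre _].
  change (is_derive (fun t => norm2 (line p v t)) 0 (Re (wirt_form (Cconj (fst p))
    (Cconj (snd p)) (fst p) (snd p) v))) in Hre.
  apply (ex_derive_continuous (V := R_NormedModule)).
  { eexists; exact Hre. }
  apply open_gt. rewrite line_0; exact Hp.
Qed.

Lemma has_wirtinger_ext_pos (f g : pt -> C) (p : pt) (a1 a2 b1 b2 : C) :
  (forall q, 0 < norm2 q -> f q = g q) -> 0 < norm2 p ->
  has_wirtinger f p a1 a2 b1 b2 -> has_wirtinger g p a1 a2 b1 b2.
Proof.
  intros E Hp H v. apply (has_cderiv_ext_loc (fun t => f (line p v t))); [| apply H].
  destruct (norm2_pos_near p v Hp) as [e He]. exists e; intros t Ht; apply E, He, Ht.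
Qed.

Section Sectors.

Variable lam : pt.

Definition sector (F : R -> R) (k l : nat) (q : pt) : C :=
  (RtoC (F (norm2 q)) * mono lam k l q)%C.

Lemma has_wirtinger_sector (F F1 : R -> R) (k l : nat) (p : pt) :
  is_derive F (norm2 p) (F1 (norm2 p)) ->
  has_wirtinger (sector F k l) p
    (Cconj (fst p) * sector F1 k l p + RtoC (INR k) * fst lam * sector F (pred k) l p)
    (Cconj (snd p) * sector F1 k l p + RtoC (INR k) * snd lam * sector F (pred k) l p)
    (fst p * sector F1 k l p + RtoC (INR l) * snd lam * sector F k (pred l) p)
    (snd p * sector F1 k l p - RtoC (INR l) * fst lam * sector F k (pred l) p).
Proof.
  intros HF. unfold sector, mono. eapply has_wirtinger_eq.
  { apply has_wirtinger_mult.
    - exact (has_wirtinger_real_comp norm2 F p _ _ _ _ _ (has_wirtinger_norm2 p) HF).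
    - apply has_wirtinger_mult; apply has_wirtinger_pow;
        [apply has_wirtinger_brk | apply has_wirtinger_hbrk]. }
  all: cbv beta; ring.
Qed.

Lemma db_sector (F F1 : R -> R) (k l : nat) (q : pt) :
  is_derive F (norm2 q) (F1 (norm2 q)) ->
  (db1 (sector F k l) q
     = fst q * sector F1 k l q + RtoC (INR l) * snd lam * sector F k (pred l) q)%C /\
  (db2 (sector F k l) q
     = snd q * sector F1 k l q - RtoC (INR l) * fst lam * sector F k (pred l) q)%C.
Proof.
  intros HF. destruct (wirtinger_derivatives _ _ _ _ _ _ (has_wirtinger_sector F F1 k l q HF))
    as [_ [_ [E1 E2]]].
  now split.
Qed.

Lemma euler_bar_sector (F F1 : R -> R) (k l : nat) (q : pt) :
  is_derive F (norm2 q) (F1 (norm2 q)) ->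
  EulerBar (sector F k l) q = sector (fun r => r * F1 r + INR l * F r) k l q.
Proof.
  intros HF. destruct (db_sector F F1 k l q HF) as [E1 E2].
  unfold EulerBar. rewrite E1, E2. unfold sector, mono.
  repeat rewrite ?RtoC_plus, ?RtoC_mult. rewrite norm2_as_C.
  destruct l as [|l]; [change (INR 0) with 0 |]; cbn [pred Cpow]; unfold hbrk; ring.
Qed.

Lemma flat_laplacian_sector (F F1 F2 : R -> R) (k l : nat) (p : pt) :
  (forall r, 0 < r -> is_derive F r (F1 r)) -> is_derive F1 (norm2 p) (F2 (norm2 p)) ->
  0 < norm2 p ->
  (Defs.d1 (db1 (sector F k l)) p + Defs.d2 (db2 (sector F k l)) p)%C
  = sector (fun r => r * F2 r + (2 + INR k + INR l) * F1 r) k l p.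
Proof.
  intros HF HF1 Hp.
  eassert (W1 : has_wirtinger (fun q => fst q * sector F1 k l q
                  + RtoC (INR l) * snd lam * sector F k (pred l) q)%C p _ _ _ _).
  { apply has_wirtinger_plus; apply has_wirtinger_mult.
    - apply has_wirtinger_u1.
    - apply has_wirtinger_sector, HF1.
    - apply has_wirtinger_const.
    - apply has_wirtinger_sector, HF, Hp. }
  eassert (W2 : has_wirtinger (fun q => snd q * sector F1 k l q
                  - RtoC (INR l) * fst lam * sector F k (pred l) q)%C p _ _ _ _).
  { apply has_wirtinger_minus; apply has_wirtinger_mult.
    - apply has_wirtinger_u2.
    - apply has_wirtinger_sector, HF1.
    - apply has_wirtinger_const.
    - apply has_wirtinger_sector, HF, Hp. }
  apply (has_wirtinger_ext_pos _ (db1 (sector F k l))) in W1;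
    [| intros q Hq; symmetry; exact (proj1 (db_sector F F1 k l q (HF _ Hq))) | exact Hp].
  apply (has_wirtinger_ext_pos _ (db2 (sector F k l))) in W2;
    [| intros q Hq; symmetry; exact (proj2 (db_sector F F1 k l q (HF _ Hq))) | exact Hp].
  destruct (wirtinger_derivatives _ _ _ _ _ _ W1) as [-> _].
  destruct (wirtinger_derivatives _ _ _ _ _ _ W2) as [_ [-> _]].
  unfold sector, mono. repeat rewrite ?RtoC_plus, ?RtoC_mult. rewrite norm2_as_C.
  destruct k as [|k]; destruct l as [|l]; try change (INR 0) with 0;
    cbn [pred Cpow]; unfold brk, hbrk; ring.
Qed.

Lemma euler_euler_bar_sector (F F1 F2 : R -> R) (k l : nat) (p : pt) :
  (forall r, 0 < r -> is_derive F r (F1 r)) -> is_derive F1 (norm2 p) (F2 (norm2 p)) ->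
  0 < norm2 p ->
  (fst p * Defs.d1 (EulerBar (sector F k l)) p + snd p * Defs.d2 (EulerBar (sector F k l)) p)%C
  = sector (fun r => r * (F1 r + r * F2 r + INR l * F1 r) + INR k * (r * F1 r + INR l * F r))
      k l p.
Proof.
  intros HF HF1 Hp.
  set (G := fun r => r * F1 r + INR l * F r).
  set (G1 := fun r => F1 r + r * F2 r + INR l * F1 r).
  assert (HG : is_derive G (norm2 p) (G1 (norm2 p))).
  { unfold G, G1. eapply is_derive_eq.
    - apply (is_derive_plus (V := R_NormedModule)).
      + apply (is_derive_mult (fun r => r) F1); [apply is_derive_id | exact HF1 | apply Rmult_comm].
      + apply is_derive_scal, HF, Hp.
    - unfold plus, mult, one; cbn. ring. }
  pose proof (has_wirtinger_sector G G1 k l p HG) as W.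
  apply (has_wirtinger_ext_pos _ (EulerBar (sector F k l))) in W;
    [| intros q Hq; symmetry; exact (euler_bar_sector F F1 k l q (HF _ Hq)) | exact Hp].
  destruct (wirtinger_derivatives _ _ _ _ _ _ W) as [-> [-> _]].
  unfold sector, mono, G, G1.
  repeat rewrite ?RtoC_plus, ?RtoC_mult. rewrite norm2_as_C.
  destruct k as [|k]; try change (INR 0) with 0; cbn [pred Cpow]; unfold brk; ring.
Qed.

(* The radial operator to which the Burns Laplacian reduces on sector functions
   of bidegree [(k, l)] ([F1], [F2] stand for [F'], [F'']). *)
Definition radial_burns (N : R) (k l : nat) (F F1 F2 : R -> R) (r : R) : R :=
  r * F2 r + (2 + INR k + INR l) * F1 r
  + N / r ^ 2 * (r * (F1 r + r * F2 r + INR l * F1 r) + INR k * (r * F1 r + INR l * F r)).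

Lemma burns_laplacian_sector (N : R) (F F1 F2 : R -> R) (k l : nat) (p : pt) :
  (forall r, 0 < r -> is_derive F r (F1 r)) -> is_derive F1 (norm2 p) (F2 (norm2 p)) ->
  0 < norm2 p ->
  BurnsLaplacian N (sector F k l) p
  = (RtoC (2 / (1 + N / norm2 p) * radial_burns N k l F F1 F2 (norm2 p)) * mono lam k l p)%C.
Proof.
  intros HF HF1 Hp. unfold BurnsLaplacian.
  rewrite (flat_laplacian_sector F F1 F2 k l p HF HF1 Hp).
  rewrite (euler_euler_bar_sector F F1 F2 k l p HF HF1 Hp).
  unfold sector, radial_burns. repeat rewrite ?RtoC_plus, ?RtoC_mult. ring.
Qed.

End Sectors.

Lemma factR_S (n : nat) : factR (S n) = INR (S n) * factR n.
Proof. unfold factR. change (fact (S n)) with (S n * fact n)%nat. apply mult_INR. Qed.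

Lemma factR_pos (n : nat) : 0 < factR n.
Proof. apply lt_0_INR, lt_O_fact. Qed.

Definition coef (k l j : nat) : R :=
  factR (k + l - j) / (factR j * factR (k - j) * factR (l - j)).

Definition prefactor (k l : nat) : R := factR k * factR l / factR (k + l).

Definition profile (N : R) (k l : nat) (r : R) : R :=
  prefactor k l * sum_f_R0 (fun j => coef k l j * (N / r) ^ j) (Nat.min k l).

Definition profile1 (N : R) (k l : nat) (r : R) : R :=
  prefactor k l * sum_f_R0 (fun j => coef k l j * (- INR j / r) * (N / r) ^ j) (Nat.min k l).

Definition profile2 (N : R) (k l : nat) (r : R) : R :=
  prefactor k l
  * sum_f_R0 (fun j => coef k l j * (INR j * (INR j + 1) / r ^ 2) * (N / r) ^ j) (Nat.min k l).

Lemma is_derive_sum_f_R0 (f df : nat -> R -> R) (n : nat) (r : R) :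
  (forall j, is_derive (f j) r (df j r)) ->
  is_derive (fun x => sum_f_R0 (fun j => f j x) n) r (sum_f_R0 (fun j => df j r) n).
Proof.
  intros H. rewrite <- sum_n_Reals.
  eapply is_derive_ext; [intros x; apply sum_n_Reals |].
  apply (is_derive_sum_n (V := R_NormedModule) f). intros j _; apply H.
Qed.

Lemma is_derive_profile (N : R) (k l : nat) (r : R) :
  0 < r -> is_derive (profile N k l) r (profile1 N k l r).
Proof.
  intros Hr. apply is_derive_scal.
  apply (is_derive_sum_f_R0 (fun j x => coef k l j * (N / x) ^ j)
           (fun j x => coef k l j * (- INR j / x) * (N / x) ^ j)).
  intros j. auto_derive; [lra |].
  destruct j as [|j]; [cbn; field; lra |].
  rewrite S_INR; cbn [pred pow]. unfold Rdiv. field; lra.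
Qed.

Lemma is_derive_profile1 (N : R) (k l : nat) (r : R) :
  0 < r -> is_derive (profile1 N k l) r (profile2 N k l r).
Proof.
  intros Hr. apply is_derive_scal.
  apply (is_derive_sum_f_R0 (fun j x => coef k l j * (- INR j / x) * (N / x) ^ j)
           (fun j x => coef k l j * (INR j * (INR j + 1) / x ^ 2) * (N / x) ^ j)).
  intros j. auto_derive; [lra |].
  destruct j as [|j]; [cbn; field; lra |].
  rewrite S_INR; cbn [pred pow]. unfold Rdiv. field; lra.
Qed.

Lemma coef_recurrence (k l j : nat) : (j < k)%nat -> (j < l)%nat ->
  coef k l (S j) * INR (S j) * (INR j - INR k - INR l)
  = - coef k l j * (INR j - INR k) * (INR j - INR l).
Proof.
  intros Hk Hl.
  destruct (Nat.le_exists_sub (S j) k) as [a [-> _]]; [lia |].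
  destruct (Nat.le_exists_sub (S j) l) as [b [-> _]]; [lia |].
  unfold coef.
  replace (a + S j + (b + S j) - S j)%nat with (S (j + a + b)) by lia.
  replace (a + S j + (b + S j) - j)%nat with (S (S (j + a + b))) by lia.
  replace (a + S j - S j)%nat with a by lia.
  replace (b + S j - S j)%nat with b by lia.
  replace (a + S j - j)%nat with (S a) by lia.
  replace (b + S j - j)%nat with (S b) by lia.
  rewrite !factR_S.
  pose proof (factR_pos (j + a + b)). pose proof (factR_pos j).
  pose proof (factR_pos a). pose proof (factR_pos b).
  rewrite !S_INR, !plus_INR, !S_INR.
  pose proof (pos_INR j). pose proof (pos_INR a). pose proof (pos_INR b).
  field. repeat split; lra.
Qed.

(* The hypergeometric equation satisfied by [sum_j coef_j y^j]: the terms
   telescope, the last one vanishing since [j = min k l] kills [(j-k)(j-l)]. *)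
Lemma coef_equation (k l : nat) (y : R) :
  sum_f_R0 (fun j => coef k l j * y ^ j *
     (INR j * (INR j - 1 - INR k - INR l) + y * (INR j - INR k) * (INR j - INR l)))
     (Nat.min k l) = 0.
Proof.
  set (T := fun j => coef k l j * y ^ j *
     (INR j * (INR j - 1 - INR k - INR l) + y * (INR j - INR k) * (INR j - INR l))).
  assert (Partial : forall n, (n <= Nat.min k l)%nat ->
    sum_f_R0 T n = coef k l n * y ^ n * (y * (INR n - INR k) * (INR n - INR l))).
  { induction n as [|n IH]; intros Hn.
    - unfold T; cbn. ring.
    - rewrite tech5, IH by lia. unfold T.
      pose proof (coef_recurrence k l n ltac:(lia) ltac:(lia)) as Hr.
      rewrite S_INR in *. cbn [pow].
      transitivity (coef k l (S n) * (y * y ^ n) * (y * (INR n + 1 - INR k) * (INR n + 1 - INR l))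
        + y * y ^ n * (coef k l (S n) * (INR n + 1) * (INR n - INR k - INR l)
                       + coef k l n * (INR n - INR k) * (INR n - INR l))); [ring |].
      rewrite Hr; ring. }
  rewrite Partial by lia.
  destruct (Nat.min_spec k l) as [[_ ->] | [_ ->]]; ring.
Qed.

Lemma sum_f_R0_lin3 (a b c : R) (A B D : nat -> R) (n : nat) :
  a * sum_f_R0 A n + b * sum_f_R0 B n + c * sum_f_R0 D n
  = sum_f_R0 (fun j => a * A j + b * B j + c * D j) n.
Proof. induction n; cbn; [ring | rewrite <- IHn; ring]. Qed.

Lemma profile_radial_equation (N : R) (k l : nat) (r : R) :
  0 < r -> radial_burns N k l (profile N k l) (profile1 N k l) (profile2 N k l) r = 0.
Proof.
  intros Hr. unfold radial_burns, profile, profile1, profile2.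
  set (y := N / r).
  transitivity (prefactor k l / r * (
    (r * r * (1 + y)) * sum_f_R0 (fun j => coef k l j * (INR j * (INR j + 1) / r ^ 2) * y ^ j) (Nat.min k l)
    + (r * (2 + INR k + INR l + y * (1 + INR k + INR l))) *
        sum_f_R0 (fun j => coef k l j * (- INR j / r) * y ^ j) (Nat.min k l)
    + (y * INR k * INR l) * sum_f_R0 (fun j => coef k l j * y ^ j) (Nat.min k l))).
  { unfold y. field. lra. }
  rewrite sum_f_R0_lin3.
  rewrite (sum_eq _ (fun j => coef k l j * y ^ j *
     (INR j * (INR j - 1 - INR k - INR l) + y * (INR j - INR k) * (INR j - INR l)))).
  - rewrite coef_equation. ring.
  - intros j _. field. lra.
Qed.

Lemma coef_nonneg (k l j : nat) : 0 <= coef k l j.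
Proof.
  unfold coef. pose proof (factR_pos (k + l - j)). pose proof (factR_pos j).
  pose proof (factR_pos (k - j)). pose proof (factR_pos (l - j)).
  apply Rlt_le, Rdiv_lt_0_compat; auto. repeat apply Rmult_lt_0_compat; auto.
Qed.

Lemma prefactor_pos (k l : nat) : 0 < prefactor k l.
Proof.
  unfold prefactor. pose proof (factR_pos (k + l)). pose proof (factR_pos k).
  pose proof (factR_pos l). apply Rdiv_lt_0_compat; auto. now apply Rmult_lt_0_compat.
Qed.

Lemma prefactor_coef_0 (k l : nat) : prefactor k l * coef k l 0 = 1.
Proof.
  unfold prefactor, coef. rewrite !Nat.sub_0_r. change (factR 0) with 1.
  pose proof (factR_pos (k + l)). pose proof (factR_pos k). pose proof (factR_pos l).
  field. lra.
Qed.

Lemma profile_N_0 (k l : nat) (r : R) : profile 0 k l r = 1.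
Proof.
  unfold profile. rewrite <- (prefactor_coef_0 k l). f_equal.
  induction (Nat.min k l) as [|n IH]; cbn [sum_f_R0]; rewrite ?IH; unfold Rdiv; cbn; ring.
Qed.

Lemma coef_sum_tail_bound (k l n : nat) (N r : R) : 0 < N -> 1 <= r ->
  0 <= sum_f_R0 (fun j => coef k l j * (N / r) ^ j) n - coef k l 0
    <= sum_f_R0 (fun j => coef k l j * N ^ j) n / r.
Proof.
  intros HN Hr. induction n as [|n [IH1 IH2]].
  - cbn. pose proof (coef_nonneg k l 0).
    assert (0 <= coef k l 0 * 1 / r) by (apply Rdiv_le_0_compat; lra).
    lra.
  - rewrite !tech5. pose proof (coef_nonneg k l (S n)) as Hc.
    assert (Hpow : 0 <= (N / r) ^ S n <= N ^ S n / r).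
    { split; [apply pow_le, Rlt_le, Rdiv_lt_0_compat; lra |].
      unfold Rdiv. rewrite Rpow_mult_distr, pow_inv.
      assert (1 <= r ^ n) by (apply pow_R1_Rle; lra).
      assert (0 < N ^ S n) by (apply pow_lt; lra).
      change (r ^ S n) with (r * r ^ n). apply Rmult_le_compat_l; [lra |].
      apply Rinv_le_contravar; nra. }
    assert (coef k l (S n) * (N / r) ^ S n <= coef k l (S n) * N ^ S n / r).
    { unfold Rdiv at 2. rewrite Rmult_assoc. apply Rmult_le_compat_l; [exact Hc | apply Hpow]. }
    pose proof (Rmult_le_pos _ _ Hc (proj1 Hpow)).
    unfold Rdiv in *. lra.
Qed.

Lemma profile_minus_1_bound (N : R) (k l : nat) (r : R) : 0 < N -> 1 <= r ->
  Rabs (profile N k l r - 1)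
    <= prefactor k l * sum_f_R0 (fun j => coef k l j * N ^ j) (Nat.min k l) / r.
Proof.
  intros HN Hr. unfold profile.
  destruct (coef_sum_tail_bound k l (Nat.min k l) N r HN Hr) as [B1 B2].
  pose proof (prefactor_pos k l).
  rewrite <- (prefactor_coef_0 k l), <- Rmult_minus_distr_l.
  rewrite Rabs_pos_eq by (apply Rmult_le_pos; lra).
  unfold Rdiv in *. rewrite Rmult_assoc. apply Rmult_le_compat_l; lra.
Qed.

Lemma phi_sector (N : R) (lam : pt) (k l : nat) : phi N lam k l = sector lam (profile N k l) k l.
Proof. reflexivity. Qed.

Lemma phi_harmonic (N : R) (lam : pt) (k l : nat) (u : pt) :
  0 < norm2 u -> BurnsLaplacian N (phi N lam k l) u = 0.
Proof.
  intros Hu. rewrite phi_sector.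
  rewrite (burns_laplacian_sector lam N _ (profile1 N k l) (profile2 N k l));
    [| intros r Hr; now apply is_derive_profile | now apply is_derive_profile1 | exact Hu].
  rewrite profile_radial_equation, Rmult_0_r by exact Hu. ring.
Qed.

Lemma norm2_normu (u : pt) : normu u ^ 2 = norm2 u.
Proof.
  unfold normu, norm2. rewrite pow2_sqrt; [reflexivity |].
  pose proof (pow2_ge_0 (Cmod (fst u))). pose proof (pow2_ge_0 (Cmod (snd u))). lra.
Qed.

Lemma phi_asymptotics (N : R) (lam : pt) (k l : nat) : 0 < N ->
  exists K R0 : R, 0 < R0 /\
    forall u : pt, R0 <= normu u ->
      Cmod (phi N lam k l u - mono lam k l u)%C <= K / normu u ^ 2 * Cmod (mono lam k l u).
Proof.
  intros HN. exists (prefactor k l * sum_f_R0 (fun j => coef k l j * N ^ j) (Nat.min k l)), 1.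
  split; [lra |]. intros u Hu.
  assert (H1 : 1 <= norm2 u) by (rewrite <- norm2_normu; nra).
  rewrite norm2_normu.
  replace (phi N lam k l u - mono lam k l u)%C
    with (RtoC (profile N k l (norm2 u) - 1) * mono lam k l u)%C
    by (unfold phi; change (phiCoef N k l u) with (profile N k l (norm2 u));
        rewrite RtoC_minus; ring).
  rewrite Cmod_mult, Cmod_R.
  apply Rmult_le_compat_r; [apply Cmod_ge_0 |].
  now apply profile_minus_1_bound.
Qed.

Lemma phi_N_0 (lam : pt) (k l : nat) (u : pt) : phi 0 lam k l u = mono lam k l u.
Proof.
  unfold phi. change (phiCoef 0 k l u) with (profile 0 k l (norm2 u)).
  rewrite profile_N_0. ring.
Qed.

Lemma coef_sym (k l j : nat) : coef k l j = coef l k j.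
Proof. unfold coef. rewrite (Nat.add_comm k l). f_equal. ring. Qed.

Lemma profile_sym (N : R) (k l : nat) (r : R) : profile N k l r = profile N l k r.
Proof.
  unfold profile, prefactor. rewrite Nat.min_comm, Nat.add_comm, (Rmult_comm (factR k)).
  f_equal. apply sum_eq. intros j _. now rewrite coef_sym.
Qed.

From mathcomp Require all_boot all_algebra Rstruct ring zify.

(* The binomial identity behind the Jacobi form, proved with the binomial
   theorem and Vandermonde's convolution. *)
Module JacobiIdentity.
Import all_boot all_algebra Rstruct ring zify.
Import GRing.Theory Num.Theory.
Local Open Scope ring_scope.

Lemma fact_neq0 (n : nat) : (n`!%:R : R) != 0.
Proof. by rewrite pnatr_eq0 -lt0n fact_gt0. Qed.

Lemma binomial_fact {n m : nat} : (m <= n)%N ->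
  ('C(n, m)%:R : R) = n`!%:R / (m`!%:R * (n - m)`!%:R).
Proof. move=> h. rewrite -(bin_fact h) !natrM. field. by rewrite !fact_neq0. Qed.

(* [C(l, m) C(m, i) = C(l, i) C(l - i, l - m)]: choosing [i <= m <= l] in two ways. *)
Lemma binomial_trinomial (l m i : nat) : (i <= m)%N -> (m <= l)%N ->
  ('C(l, m) * 'C(m, i) = 'C(l, i) * 'C(l - i, l - m))%N.
Proof.
  move=> him hml. apply/eqP. rewrite -(eqr_nat R) !natrM.
  rewrite (binomial_fact hml) (binomial_fact him) (binomial_fact (leq_trans him hml)).
  rewrite (@binomial_fact (l - i) (l - m)); last by lia.
  have -> : (l - i - (l - m) = m - i)%N by lia.
  apply/eqP. field. by rewrite !fact_neq0.
Qed.

Lemma binomial_convolution (k l i : nat) : (i <= l)%N ->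
  (\sum_(m < l.+1) 'C(k, m) * 'C(l, m) * 'C(m, i) = 'C(l, i) * 'C(k + (l - i), l))%N.
Proof.
  move=> hil. rewrite -binomial.Vandermonde big_distrr /=. apply: eq_bigr => m _.
  have hm : (m <= l)%N by rewrite -ltnS.
  case: (ltnP m i) => h.
  - rewrite (bin_small h) muln0 (@bin_small (l - i) (l - m)); last by lia.
    by rewrite !muln0.
  - by rewrite -mulnA binomial_trinomial //; lia.
Qed.

Lemma expand_shifted_power (x : R) (m l : nat) : (m <= l)%N ->
  x ^+ (l - m) * (1 + x) ^+ m = \sum_(i < l.+1) ('C(m, i))%:R * x ^+ (l - i).
Proof.
  move=> hml. rewrite addrC exprDn mulr_sumr.
  rewrite (big_ord_widen l.+1 (fun i => x ^+ (l - m) * (x ^+ (m - i) * 1 ^+ i *+ 'C(m, i)))) //.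
  rewrite big_mkcond. apply: eq_bigr => i _. case: ifP => h.
  - rewrite expr1n mulr1 mulrnAr -exprD mulr_natl.
    by have -> : (l - m + (m - i) = l - i)%N by lia.
  - by rewrite bin_small ?mul0r //; lia.
Qed.

Lemma jacobi_binomial_identity (x : R) (k l : nat) : (l <= k)%N ->
  \sum_(s < l.+1) ('C(k, l - s) * 'C(l, s))%:R * x ^+ s * (1 + x) ^+ (l - s)
  = \sum_(i < l.+1) ('C(l, i) * 'C(k + (l - i), l))%:R * x ^+ (l - i).
Proof.
  move=> hlk. rewrite (reindex_inj rev_ord_inj) /=.
  transitivity (\sum_(m < l.+1) ('C(k, m) * 'C(l, m))%:R * (x ^+ (l - m) * (1 + x) ^+ m)).
  { apply: eq_bigr => m _. have hm : (m <= l)%N by rewrite -ltnS.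
    by rewrite subSS subKn // bin_sub // mulrA. }
  transitivity (\sum_(m < l.+1) \sum_(i < l.+1)
                  ('C(k, m) * 'C(l, m) * 'C(m, i))%:R * x ^+ (l - i)).
  { apply: eq_bigr => m _. have hm : (m <= l)%N by rewrite -ltnS.
    rewrite expand_shifted_power // mulr_sumr. apply: eq_bigr => i _.
    by rewrite !natrM !mulrA. }
  rewrite exchange_big /=. apply: eq_bigr => i _. have hi : (i <= l)%N by rewrite -ltnS.
  by rewrite -mulr_suml -natr_sum binomial_convolution.
Qed.

Lemma binomRE (n m : nat) : (m <= n)%N -> binomR n m = ('C(n, m)%:R : R).
Proof. move=> h. by rewrite (binomial_fact h) /binomR /factR !INRE !factE RdivE RmultE. Qed.

Lemma coefE (k l j : nat) : (j <= l)%N -> (l <= k)%N ->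
  coef k l j = (('C(l, j) * 'C(k + (l - j), l))%:R : R).
Proof.
  move=> hjl hlk. rewrite natrM (binomial_fact hjl) (@binomial_fact (k + (l - j)) l); last by lia.
  rewrite /coef /factR !INRE !factE RdivE !RmultE -?plusE -?minusE !minusE !plusE.
  have -> : (k + (l - j) - l = k - j)%N by lia.
  have -> : (k + l - j = k + (l - j))%N by lia.
  field. by rewrite !fact_neq0.
Qed.

Lemma jacobi_binomial_identity_sum_f_R0 (k l : nat) (x : R) : (l <= k)%N ->
  sum_f_R0 (fun s => Rmult (Rmult (Rmult (binomR k (l - s)) (binomR l s)) (pow x s))
                           (pow (Rplus 1 x) (l - s))) l
  = sum_f_R0 (fun j => Rmult (coef k l j) (pow x (l - j))) l.
Proof.
  move=> hlk. rewrite !sum_f_R0E !big_mkord.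
  transitivity (\sum_(s < l.+1) ('C(k, l - s) * 'C(l, s))%:R * x ^+ s * (1 + x) ^+ (l - s)).
  { apply: eq_bigr => s _. have hs : (s <= l)%N by rewrite -ltnS.
    rewrite !binomRE; try lia. by rewrite !RmultE !RpowE RplusE natrM. }
  rewrite jacobi_binomial_identity //. apply: eq_bigr => j _.
  have hj : (j <= l)%N by rewrite -ltnS.
  by rewrite coefE // RmultE RpowE.
Qed.

End JacobiIdentity.

Lemma jacobi_binomial_identity (k l : nat) (x : R) : (l <= k)%nat ->
  sum_f_R0 (fun s => binomR k (l - s) * binomR l s * x ^ s * (1 + x) ^ (l - s)) l
  = sum_f_R0 (fun j => coef k l j * x ^ (l - j)) l.
Proof.
  intros Hlk.
  exact (JacobiIdentity.jacobi_binomial_identity_sum_f_R0 k l x (ssrbool.introT ssrnat.leP Hlk)).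
Qed.

Lemma profile_jacobi (N : R) (k l : nat) (r : R) : 0 < N -> 0 < r -> (l <= k)%nat ->
  profile N k l r = prefactor k l * / (r / N) ^ l * jacobiP l (k - l) 0 (1 + 2 * (r / N)).
Proof.
  intros HN Hr Hlk. set (x := r / N).
  assert (Hx : 0 < x) by (apply Rdiv_lt_0_compat; lra).
  unfold jacobiP. replace (l + (k - l))%nat with k by lia. rewrite Nat.add_0_r.
  rewrite (sum_eq _ (fun s => binomR k (l - s) * binomR l s * x ^ s * (1 + x) ^ (l - s))).
  2: { intros s _. replace ((1 + 2 * x - 1) / 2) with x by field.
       replace ((1 + 2 * x + 1) / 2) with (1 + x) by field. reflexivity. }
  rewrite (jacobi_binomial_identity k l x Hlk).
  unfold profile. rewrite Nat.min_r by exact Hlk. rewrite Rmult_assoc. f_equal.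
  rewrite scal_sum. apply sum_eq. intros j Hj.
  replace (N / r) with (/ x) by (unfold x; field; lra).
  replace (x ^ l) with (x ^ (l - j) * x ^ j) by (rewrite <- pow_add; f_equal; lia).
  rewrite pow_inv. field. split; apply pow_nonzero; lra.
Qed.

Lemma phi_jacobi (N : R) (lam : pt) (k l : nat) (u : pt) : 0 < N -> 0 < norm2 u ->
  let chi := norm2 u / N in
  ((l <= k)%nat ->
     phi N lam k l u =
     (RtoC (factR k * factR l / factR (k + l) * / chi ^ l
            * jacobiP l (k - l) 0 (1 + 2 * chi)) * mono lam k l u)%C) /\
  ((k < l)%nat ->
     phi N lam k l u =
     (RtoC (factR k * factR l / factR (k + l) * / chi ^ k
            * jacobiP k (l - k) 0 (1 + 2 * chi)) * mono lam k l u)%C).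
Proof.
  intros HN Hu chi. unfold phi. change (phiCoef N k l u) with (profile N k l (norm2 u)).
  split; intros Hkl.
  { now rewrite profile_jacobi. }
  rewrite profile_sym, profile_jacobi by (auto; lia).
  unfold prefactor. now rewrite Nat.add_comm, (Rmult_comm (factR l)).
Qed.

Theorem mainTheorem5 (N : R) (lam : pt) (k l : nat) :
  0 < N ->
  (* harmonicity on C^2 \ {0} *)
  (forall u : pt, u <> (RtoC 0, RtoC 0) ->
     BurnsLaplacian N (phi N lam k l) u = RtoC 0) /\
  (* phi = [u lam]^k [hat u lam]^l (1 + O(|u|^-2)) as |u| -> oo *)
  (exists (K R0 : R), 0 < R0 /\
     forall u : pt, R0 <= normu u ->
       Cmod (phi N lam k l u - mono lam k l u)%C
         <= K / normu u ^ 2 * Cmod (mono lam k l u)) /\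
  (* reduction at N = 0 *)
  (forall u : pt, u <> (RtoC 0, RtoC 0) -> phi 0 lam k l u = mono lam k l u) /\
  (* Jacobi form, chi = |u|^2 / N *)
  (forall u : pt, u <> (RtoC 0, RtoC 0) ->
     let chi := norm2 u / N in
     ((l <= k)%nat ->
        phi N lam k l u =
        (RtoC (factR k * factR l / factR (k + l) * / chi ^ l
               * jacobiP l (k - l) 0 (1 + 2 * chi)) * mono lam k l u)%C) /\
     ((k < l)%nat ->
        phi N lam k l u =
        (RtoC (factR k * factR l / factR (k + l) * / chi ^ k
               * jacobiP k (l - k) 0 (1 + 2 * chi)) * mono lam k l u)%C)).
Proof.
  intros HN. split; [| split; [| split]].
  { intros u Hu. exact (phi_harmonic N lam k l u (norm2_pos u Hu)). }
  { exact (phi_asymptotics N lam k l HN). }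
  { intros u _. apply phi_N_0. }
  intros u Hu. exact (phi_jacobi N lam k l u HN (norm2_pos u Hu)).
Qed.
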